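(* Let $H$ be an ideal geometric-value hash function with parameter $\frac{\gamma}{1+\gamma}$, and let the hash key $\zeta_i$ be drawn uniformly and be unknown to the adversary. In the procedure $\textsf{DPFMPS-Gen}$ (described in the context), for each fixed $i\in[M]$, the output row $\boldsymbol{A}_i=(\boldsymbol{A}_{i,1},\ldots,\boldsymbol{A}_{i,k'})$ (one set of partition sketches), viewed as a randomized function of the local dataset, is $\epsilon'$-differentially private, where $\epsilon'=\frac{\epsilon_2}{4\sqrt{M\log(1/\delta_2)}}$.
   Context: Differential privacy: a randomized algorithm $\mathcal{A}$ is $\epsilon$-DP if for all pairs of datasets $\mathbf{X},\mathbf{X}'$ differing in one user record (one user added or removed) and all sets $O$ of outputs, $\Pr[\mathcal{A}(\mathbf{X})\in O]\le e^{\epsilon}\Pr[\mathcal{A}(\mathbf{X}')\in O]$. A random variable $Y\sim\mathrm{Geometric}(p)$ takes values in $\{1,2,\ldots\}$ with $\Pr[Y\le z]=1-(1-p)^z$. An ideal geometric-value hash function $H:\mathcal{X}\times\mathbb{Z}\to\mathbb{N}_+$ with parameter $\frac{\gamma}{1+\gamma}$ ($\gamma>0$) is one such that, for a uniformly drawn key $\zeta$, for any finite set of distinct inputs $x_1,\ldots,x_t$ the values $H_\zeta(x_1),\ldots,H_\zeta(x_t)$ are i.i.d. $\mathrm{Geometric}(\frac{\gamma}{1+\gamma})$. Procedure $\mathtt{DPFM}(\mathcal{M},\epsilon',\gamma,\zeta)$ on a set $\mathcal{M}$ of user ids: set $n_p=\lceil 1/(e^{\epsilon'}-1)\rceil$ and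 $\alpha_{\min}=\lceil\log_{1+\gamma}\frac{1}{1-e^{-\epsilon'}}\rceil$; let $\alpha_p=\max\{Y_1,\ldots,Y_{n_p}\}$ with $Y_j$ fresh i.i.d. $\mathrm{Geometric}(\frac{\gamma}{1+\gamma})$; let $\alpha_{real}=\max\{H_\zeta(\mathtt{id}):\mathtt{id}\in\mathcal{M}\}$; return $\max\{\alpha_p,\alpha_{real},\alpha_{\min}\}$. Procedure $\textsf{DPFMPS-Gen}$ with inputs: local dataset $\mathbf{X}^{(\ell)}$ of records $x^{(\ell)}_{\mathtt{id}}$ indexed by user ids, a given set of centers $\{c^{(\ell)}_1,\ldots,c^{(\ell)}_{k'}\}$ (not depending on the protected data), parameters $\epsilon_2,\delta_2,\gamma,M$ and keys $\zeta_1,\ldots,\zeta_M$. It sets $\epsilon'=\frac{\epsilon_2}{4\sqrt{M\log(1/\delta_2)}}$, partitions user ids into $\mathcal{M}^{(\ell)}_1,\ldots,\mathcal{M}^{(\ell)}_{k'}$ with $\mathtt{id}\in\mathcal{M}^{(\ell)}_a$ iff $a=\arg\min_j\|x^{(\ell)}_{\mathtt{id}}-c^{(\ell)}_j\|_2^2$, and sets $\boldsymbol{A}_{i,a}=\mathtt{DPFM}(\mathcal{M}^{(\ell)}_a,\epsilon',\gamma,\zeta_i)$ for $i\in[M]$, $a\in[k']$. *)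

From HB Require Import structures.
From mathcomp Require Import all_boot all_order all_algebra.
From mathcomp Require Import finmap.
From mathcomp Require Import all_classical all_reals all_analysis.
Set Implicit Arguments. Unset Strict Implicit. Unset Printing Implicit Defensive.
Import Order.TTheory GRing.Theory Num.Theory.
Local Open Scope ring_scope.
Local Open Scope classical_set_scope.
Local Open Scope fset_scope.

(* CDF of Geometric(p) on {1,2,...}: Pr[Y <= z] = 1 - (1-p)^z. *)
Definition geomCDF (R : realType) (p : R) (z : nat) : R := 1 - (1 - p) ^+ z.

Definition iid_geometric (R : realType) (d : measure_display)
  (Omega : measurableType d) (P : probability Omega R)
  (I : eqType) (G : I -> Omega -> nat) (p : R) : Prop :=
  (forall j z, measurable [set w | G j w = z]) /\
  (forall (s : seq I) (z : I -> nat), uniq s ->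
     P [set w | forall j, j \in s -> (G j w <= z j)%N]
     = (\prod_(j <- s) geomCDF p (z j))%:E).

(* The randomness used by one row of DPFMPS-Gen: the hash values
   H_zeta(id) of all user ids, and the fresh geometric samples Y_{a,j}
   used by the call DPFM(M_a, ...) for partition a. *)
Definition hash_source (d : measure_display) (Omega : measurableType d)
  (idT : choiceType) (K : Type) (k : nat)
  (H : K -> idT -> nat) (zeta : Omega -> K) (Y : 'I_k -> nat -> Omega -> nat)
  : idT + ('I_k * nat) -> Omega -> nat :=
  fun j w => match j with
             | inl u => H (zeta w) u
             | inr aj => Y aj.1 aj.2 w
             end.

Definition sqdist (R : realType) (n : nat) (x y : 'rV[R]_n) : R :=
  \sum_(i < n) (x 0 i - y 0 i) ^+ 2.

Definition assign (R : realType) (n k : nat) (c : 'I_k.+1 -> 'rV[R]_n)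
  (x : 'rV[R]_n) : 'I_k.+1 :=
  Order.arg_min (ord0 : 'I_k.+1) xpredT (fun j => sqdist x (c j)).

Definition dataset (R : realType) (idT : choiceType) (n : nat) :=
  {fmap idT -> 'rV[R]_n}.

Definition add_one (R : realType) (idT : choiceType) (n : nat)
  (X X' : dataset R idT n) : Prop :=
  exists (u : idT) (x : 'rV[R]_n), u \notin domf X /\ X' = X.[u <- x]%fmap.

Definition neighbors (R : realType) (idT : choiceType) (n : nat)
  (X X' : dataset R idT n) : Prop := add_one X X' \/ add_one X' X.

Definition eps_DP (R : realType) (d : measure_display)
  (Omega : measurableType d) (P : probability Omega R)
  (idT : choiceType) (n : nat) (Out : Type)
  (eps : R) (A : dataset R idT n -> Omega -> Out) : Prop :=
  forall X X' : dataset R idT n, neighbors X X' ->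
  forall O : set Out,
    (P (A X @^-1` O) <= (expR eps)%:E * P (A X' @^-1` O))%E.

Definition eps_prime (R : realType) (eps2 delta2 : R) (M : nat) : R :=
  eps2 / (4 * Num.sqrt (M%:R * ln (delta2^-1))).

Definition n_p (R : realType) (eps' : R) : nat :=
  `|Num.ceil ((expR eps' - 1)^-1)|%N.

Definition alpha_min (R : realType) (eps' gamma : R) : nat :=
  `|Num.ceil (ln ((1 - expR (- eps'))^-1) / ln (1 + gamma))|%N.

(* DPFM(M_a, eps', gamma, zeta) with M_a the ids of X assigned to center a:
   max{alpha_p, alpha_real, alpha_min}. *)
Definition DPFM (R : realType) (d : measure_display) (Omega : measurableType d)
  (idT : choiceType) (K : Type) (n k : nat)
  (H : K -> idT -> nat) (zeta : Omega -> K) (Y : 'I_k.+1 -> nat -> Omega -> nat)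
  (eps' gamma : R) (c : 'I_k.+1 -> 'rV[R]_n) (X : dataset R idT n)
  (a : 'I_k.+1) (w : Omega) : nat :=
  let alpha_p := (\max_(j < n_p eps') Y a j w)%N in
  let alpha_real := (\max_(u : domf X | assign c (X u) == a) H (zeta w) (val u))%N in
  maxn (maxn alpha_p alpha_real) (alpha_min eps' gamma).

Definition DPFMPS_row (R : realType) (d : measure_display) (Omega : measurableType d)
  (idT : choiceType) (K : Type) (n k : nat)
  (H : K -> idT -> nat) (zeta : Omega -> K) (Y : 'I_k.+1 -> nat -> Omega -> nat)
  (eps' gamma : R) (c : 'I_k.+1 -> 'rV[R]_n)
  (X : dataset R idT n) (w : Omega) : {ffun 'I_k.+1 -> nat} :=
  [ffun a => DPFM H zeta Y eps' gamma c X a w].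

From HB Require Import structures.
From mathcomp Require Import all_boot all_order all_algebra.
From mathcomp Require Import finmap.
From mathcomp Require Import all_classical all_reals all_analysis.
From mathcomp Require Import ring lra.
Import Order.TTheory GRing.Theory Num.Theory.
Local Open Scope ring_scope.

(* Let G(z) = [alpha_min <= z] (1 - (1 + gamma)^-z).  By independence of
   the hash values and the fresh samples, the row of sketches of a dataset X
   has joint CDF  P[A <= b] = prod_a G(b_a)^(n_p + |M_a|),  so its probability
   mass function is the product of the increments G(z)^N - G(z-1)^N with
   N = n_p + |M_a|.  Adding or removing a user changes exactly one exponent N by
   one, and for 0 <= b <= a <= 1 the differences a^N - b^N and a^(N+1) - b^(N+1)
   are within a factor 1 + 1/N <= e^eps' of each other as soon as e^eps' a >= 1;
   the choices of n_p and alpha_min guarantee both conditions.  Summing this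
   pointwise bound over the countably many outputs in a set O gives eps'-DP. *)

Section power_differences.
Context {R : realFieldType}.
Implicit Types a b e : R.

Lemma subrXX_ge a b N : 0 <= b -> b <= a -> b <= 1 ->
  N%:R * b ^+ N * (a - b) <= a ^+ N - b ^+ N.
Proof.
move=> b0 ba b1; rewrite subrXX [leRHS]mulrC ler_wpM2r ?subr_ge0 //.
have -> : N%:R * b ^+ N = \sum_(i < N) b ^+ N by rewrite sumr_const card_ord mulr_natl.
apply: ler_sum => i _.
have iN : (N.-1 - i + i <= N)%N by rewrite subnK ?leq_pred // -ltnS (leq_trans (ltn_ord i)) ?leqSpred.
apply: (le_trans (ler_wiXn2l b0 b1 iN)); rewrite exprD ler_wpM2r ?exprn_ge0 //.
by rewrite lerXn2r ?nnegrE // (le_trans b0).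
Qed.

Let subrXX_succ a b N :
  a ^+ N.+1 - b ^+ N.+1 = a * (a ^+ N - b ^+ N) + b ^+ N * (a - b).
Proof. by rewrite !exprS; ring. Qed.

Lemma subrXX_le_succ a b e N : 0 <= b -> b <= a -> 1 <= e * a ->
  a ^+ N - b ^+ N <= e * (a ^+ N.+1 - b ^+ N.+1).
Proof.
move=> b0 ba ea; have a0 : 0 <= a := le_trans b0 ba.
have e0 : 0 <= e by nra.
have dN : 0 <= a ^+ N - b ^+ N by rewrite subr_ge0 lerXn2r ?nnegrE.
rewrite subrXX_succ; apply: (@le_trans _ _ (e * (a * (a ^+ N - b ^+ N)))).
  by rewrite mulrA -[leLHS]mul1r ler_wpM2r.
by rewrite ler_wpM2l // lerDl mulr_ge0 ?exprn_ge0 ?subr_ge0.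
Qed.

Lemma subrXX_succ_le a b N : 0 <= b -> b <= a -> a <= 1 -> (0 < N)%N ->
  a ^+ N.+1 - b ^+ N.+1 <= (1 + N%:R^-1) * (a ^+ N - b ^+ N).
Proof.
move=> b0 ba a1 N0; have a0 : 0 <= a := le_trans b0 ba.
have dN : 0 <= a ^+ N - b ^+ N by rewrite subr_ge0 lerXn2r ?nnegrE.
rewrite subrXX_succ mulrDl mul1r lerD //.
  by rewrite -[leRHS]mul1r ler_wpM2r.
by rewrite ler_pdivlMl ?ltr0n // mulrA; apply: subrXX_ge; rewrite // (le_trans ba a1).
Qed.
End power_differences.

Section pmf_of_cdf.
Context {R : realFieldType}.

Definition pmf_of_cdf (C : nat -> R) (z : nat) : R :=
  C z - (if z is z'.+1 then C z' else 0).

Lemma pmf_of_cdf_ge0 (C : nat -> R) z : 0 <= C 0 ->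
  {homo C : x y / (x <= y)%N >-> x <= y} -> 0 <= pmf_of_cdf C z.
Proof. by case: z => [|z] C0 C_homo; rewrite /pmf_of_cdf ?subr0 // subr_ge0 C_homo. Qed.

Lemma pmf_of_cdf_expr_ratio (G : nat -> R) e N z :
  0 <= G 0 -> (forall z, G z <= 1) -> {homo G : x y / (x <= y)%N >-> x <= y} ->
  (forall z, G z != 0 -> 1 <= e * G z) -> (0 < N)%N -> 1 + N%:R^-1 <= e ->
  pmf_of_cdf (fun z => G z ^+ N) z <= e * pmf_of_cdf (fun z => G z ^+ N.+1) z /\
  pmf_of_cdf (fun z => G z ^+ N.+1) z <= e * pmf_of_cdf (fun z => G z ^+ N) z.
Proof.
move=> G0 G1 G_homo Ge N0 eN.
have [b /andP[b0 bz] pmfE] : exists2 b, 0 <= b <= G z &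
    forall M, (0 < M)%N -> pmf_of_cdf (fun z => G z ^+ M) z = G z ^+ M - b ^+ M.
  case: z => [|z]; last by exists (G z); rewrite ?(le_trans G0) ?G_homo.
  exists 0 => [|M M0]; first by rewrite lexx G0.
  by rewrite /pmf_of_cdf expr0n gtn_eqF.
rewrite !pmfE //; have [Gz0 | /Ge eGz] := eqVneq (G z) 0.
  have -> : b = 0 by apply: le_anti; rewrite b0 -Gz0 bz.
  by rewrite Gz0 !expr0n !subrr mulr0.
split; first exact: subrXX_le_succ.
apply: le_trans (subrXX_succ_le _ _ _ b0 bz (G1 z) N0) _.
by rewrite ler_wpM2r // subr_ge0 lerXn2r ?nnegrE // (le_trans b0).
Qed.
End pmf_of_cdf.

Section truncated_cdf.
Context {R : realFieldType} (m : nat) (F : nat -> R).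
Hypothesis F01 : forall z, 0 <= F z <= 1.
Hypothesis F_homo : {homo F : x y / (x <= y)%N >-> x <= y}.

Definition trunc_cdf (z : nat) : R := (m <= z)%:R * F z.

Lemma trunc_cdf_ge0 z : 0 <= trunc_cdf z.
Proof. by rewrite mulr_ge0 // (andP (F01 z)).1. Qed.

Lemma trunc_cdf_le1 z : trunc_cdf z <= 1.
Proof. by rewrite /trunc_cdf; case: leqP; rewrite ?mul1r ?mul0r // (andP (F01 z)).2. Qed.

Lemma trunc_cdf_homo : {homo trunc_cdf : x y / (x <= y)%N >-> x <= y}.
Proof.
move=> x y xy; rewrite /trunc_cdf; case: (leqP m x) => [mx | _].
  by rewrite (leq_trans mx xy) !mul1r F_homo.
by rewrite mul0r trunc_cdf_ge0.
Qed.

Lemma pmf_trunc_cdf_ge0 N z : 0 <= pmf_of_cdf (fun z => trunc_cdf z ^+ N) z.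
Proof.
apply: pmf_of_cdf_ge0; first exact: exprn_ge0 (trunc_cdf_ge0 0).
by move=> x y xy; rewrite lerXn2r ?nnegrE ?trunc_cdf_ge0 ?trunc_cdf_homo.
Qed.

Lemma pmf_trunc_cdf_ratio e N z :
  1 <= e * F m -> (0 < N)%N -> 1 + N%:R^-1 <= e ->
  pmf_of_cdf (fun z => trunc_cdf z ^+ N) z <=
    e * pmf_of_cdf (fun z => trunc_cdf z ^+ N.+1) z /\
  pmf_of_cdf (fun z => trunc_cdf z ^+ N.+1) z <=
    e * pmf_of_cdf (fun z => trunc_cdf z ^+ N) z.
Proof.
move=> eFm N0 eN; have e0 : 0 <= e by apply: le_trans eN; rewrite addr_ge0 ?invr_ge0.
apply: pmf_of_cdf_expr_ratio; rewrite ?trunc_cdf_ge0 //.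
- exact: trunc_cdf_le1.
- exact: trunc_cdf_homo.
move=> y; rewrite /trunc_cdf; case: leqP => [my _ | _]; last by rewrite mul0r eqxx.
by rewrite mul1r (le_trans eFm) // ler_wpM2l ?F_homo.
Qed.

End truncated_cdf.

Lemma prod_fiber {R : comPzSemiRingType} {U J : finType} (g : U -> J)
  (phi : J -> R) :
  \prod_(u : U) phi (g u) = \prod_(j : J) phi j ^+ (\sum_(u : U) (g u == j)).
Proof.
rewrite (partition_big g predT) //=; apply: eq_bigr => j _.
rewrite (eq_bigr (fun _ => phi j)) => [|u /eqP <- //].
by rewrite prodr_const -sum1_card big_mkcond.
Qed.

Lemma ler_prodr_at {R : numDomainType} {I : finType} (i0 : I) (F G : I -> R) e :
  (forall i, 0 <= F i) -> (forall i, i != i0 -> F i = G i) -> F i0 <= e * G i0 ->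
  \prod_i F i <= e * \prod_i G i.
Proof.
move=> F0 FG Fi0; rewrite (bigD1 i0) // [X in _ <= _ * X](bigD1 i0) //= mulrA.
have -> : \prod_(i | i != i0) G i = \prod_(i | i != i0) F i.
  by apply: eq_bigr => i /FG.
by rewrite ler_wpM2r // prodr_ge0.
Qed.

Section fmap_bigop.
Local Open Scope fmap_scope.
Context {S : Type} {idx : S} (op : Monoid.com_law idx) {K : choiceType} {V : Type}.

Lemma big_domf_setf (X : {fmap K -> V}) (u0 : K) (x : V) (F : V -> S) :
  u0 \notin domf X ->
  \big[op/idx]_(u : domf X.[u0 <- x]) F (X.[u0 <- x] u) =
  op (F x) (\big[op/idx]_(u : domf X) F (X u)).
Proof.
move=> u0X.
have by_keys (Z : {fmap K -> V}) :
    \big[op/idx]_(u : domf Z) F (Z u) = \big[op/idx]_(v <- domf Z) F (odflt x Z.[? v]).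
  by rewrite big_seq_fsetE; apply: eq_bigr => u _; rewrite -Some_fnd.
rewrite !by_keys [X in enum_fset X]dom_setf big_fsetU1 //= fnd_set eqxx.
congr (op _ _).
apply: eq_big_seq => v vX; rewrite fnd_set.
by case: eqP => // vu0; rewrite -vu0 vX in u0X.
Qed.

End fmap_bigop.

Section nat_valued_events.
Local Open Scope classical_set_scope.
Context {d : measure_display} {T : measurableType d}.

Lemma measurable_forall (I : finType) (E : I -> set T) :
  (forall i, measurable (E i)) -> measurable [set w | forall i, E i w].
Proof.
move=> mE; rewrite (_ : [set w | _] = \bigcap_(i in setT) E i).
  exact: fin_bigcap_measurable finite_finset _.
by apply/seteqP; split=> w /= Ew i //; apply: Ew.
Qed.

Lemma measurable_leq_of_eq (g : T -> nat) :
  (forall z, measurable [set w | g w = z]) ->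
  forall z, measurable [set w | (g w <= z)%N].
Proof.
move=> mg; elim=> [|z IH].
  rewrite (_ : [set w | _] = [set w | g w = 0%N]) //.
  by apply/seteqP; split=> w /=; rewrite leqn0 => /eqP.
rewrite (_ : [set w | _] = [set w | (g w <= z)%N] `|` [set w | g w = z.+1]).
  exact: measurableU.
apply/seteqP; split=> w /=; first by rewrite leq_eqVlt ltnS => /orP[/eqP|]; [right|left].
by move=> [/leq_trans->|->].
Qed.

Lemma measurable_eq_of_leq (g : T -> nat) :
  (forall z, measurable [set w | (g w <= z)%N]) ->
  forall z, measurable [set w | g w = z].
Proof.
move=> mg [|z].
  rewrite (_ : [set w | _] = [set w | (g w <= 0)%N]) //.
  by apply/seteqP; split=> w /=; rewrite leqn0 => /eqP.
rewrite (_ : [set w | _] = [set w | (g w <= z.+1)%N] `\` [set w | (g w <= z)%N]).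
  exact: measurableD.
apply/seteqP; split=> w /=; first by move=> ->; rewrite leqnn ltnn.
by move=> [h1 /negP]; rewrite -ltnNge => h2; apply/eqP; rewrite eqn_leq h1.
Qed.

End nat_valued_events.

Section joint_pmf.
Local Open Scope classical_set_scope.
Context {d : measure_display} {T : measurableType d} {R : realType}.
Variables (P : probability T R) (I : finType) (V : I -> T -> nat).
Hypothesis mV : forall i z, measurable [set w | V i w = z].

Let E (s : seq I) (f : I -> nat) :=
  [set w | forall i, if i \in s then V i w = f i else (V i w <= f i)%N].

Let mE s f : measurable (E s f).
Proof.
apply: measurable_forall => i; case: (i \in s); first exact: mV.
exact: measurable_leq_of_eq.
Qed.

Let E_cons0 x s f : x \notin s -> f x = 0%N -> E (x :: s) f = E s f.
Proof.
move=> xs fx0; apply/seteqP; split=> w /= Ew i; move: (Ew i); rewrite inE.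
  by case: eqP => [-> | _] //=; rewrite (negbTE xs) => ->.
by case: eqP => [-> | _] //=; rewrite (negbTE xs) fx0 leqn0 => /eqP.
Qed.

Let E_consS {x s f f'} : x \notin s -> f x = (f' x).+1 ->
  (forall i, i != x -> f' i = f i) ->
  E s f' `<=` E s f /\ E (x :: s) f = E s f `\` E s f'.
Proof.
move=> xs fxS f'f; split.
  move=> w E'w i; move: (E'w i); have [-> | /f'f ->] := eqVneq i x => //.
  by rewrite (negbTE xs) fxS => /leq_trans; apply.
apply/seteqP; split=> w /=.
  move=> Ew; split=> [i | E'w].
    by move: (Ew i); rewrite inE; case: eqP => [-> | _] //; rewrite (negbTE xs) => ->.
  by move: (Ew x) (E'w x); rewrite mem_head (negbTE xs) fxS => ->; rewrite ltnn.
move=> [Ew NE'w] i; rewrite inE; case: eqP => [-> | /eqP ix] /=; last by apply: Ew.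
move: (Ew x); rewrite (negbTE xs) fxS leq_eqVlt ltnS => /orP[/eqP // | Vxz].
exfalso; apply: NE'w => j; have [-> | /f'f ->] := eqVneq j x; last exact: Ew.
by rewrite (negbTE xs).
Qed.

(* Inclusion-exclusion one coordinate at a time: pinning coordinate x to the
   value f x amounts to subtracting the event where it is bounded by f x - 1. *)
Lemma pmf_of_cdf_prod (C : I -> nat -> R) :
  (forall b : I -> nat, P [set w | forall i, (V i w <= b i)%N] = (\prod_i C i (b i))%:E) ->
  forall f : I -> nat,
  P [set w | forall i, V i w = f i] = (\prod_i pmf_of_cdf (C i) (f i))%:E.
Proof.
move=> cdfV.
suff PE s f : uniq s ->
    P (E s f) = (\prod_i if i \in s then pmf_of_cdf (C i) (f i) else C i (f i))%:E.
  move=> f; rewrite (_ : [set w | _] = E (enum I) f) ?PE ?enum_uniq //.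
    by under eq_bigr do rewrite mem_enum.
  by apply/seteqP; split=> w /= Ew i; move: (Ew i); rewrite mem_enum.
elim: s f => [|x s IH] f /=.
  by move=> _; rewrite -cdfV.
move=> /andP[xs us].
have drop_x g : \prod_(i | i != x)
    (if i \in x :: s then pmf_of_cdf (C i) (g i) else C i (g i)) =
  \prod_(i | i != x) (if i \in s then pmf_of_cdf (C i) (g i) else C i (g i)).
  by apply: eq_bigr => i ix; rewrite inE (negbTE ix).
rewrite (bigD1 x) //= mem_head drop_x; case fx : (f x) => [|z].
  by rewrite E_cons0 // IH // (bigD1 x) //= (negbTE xs) fx /pmf_of_cdf subr0.
pose f' i := if i == x then z else f i.
have f'x : f' x = z by rewrite /f' eqxx.
have f'f i : i != x -> f' i = f i by rewrite /f' => /negbTE ->.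
have fxS : f x = (f' x).+1 by rewrite f'x.
have [E'E ->] := E_consS xs fxS f'f.
have PEsf : P (E s f) = (P (E s f `\` E s f') + P (E s f'))%E.
  by rewrite -{2}(setIidr E'E); exact: measureDI.
have fin : P (E s f') \is a fin_num by rewrite IH.
rewrite -(addeK (P (E s f `\` E s f')) fin) -PEsf !IH // -EFinB.
rewrite (bigD1 x) //= [X in _ - X](bigD1 x) //= (negbTE xs) fx f'x.
by under [X in _ - _ * X]eq_bigr => i ix do rewrite f'f //; rewrite -mulrBl.
Qed.

End joint_pmf.

Section countable_preimage.
Local Open Scope classical_set_scope.
Local Open Scope ereal_scope.
Context {d : measure_display} {T : measurableType d} {R : realType}.
Variable mu : {measure set T -> \bar R}.

Lemma le_measure_preimage_countable (U : countType) (f g : T -> U) (e : R) :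
  (forall u, measurable (f @^-1` [set u])) ->
  (forall u, measurable (g @^-1` [set u])) -> (0 <= e)%R ->
  (forall u, mu (f @^-1` [set u]) <= e%:E * mu (g @^-1` [set u])) ->
  forall O : set U, mu (f @^-1` O) <= e%:E * mu (g @^-1` O).
Proof.
move=> mf mg e0 fg O.
pose O_ n := [set u | O u /\ choice.pickle u = n].
have O_cases n : O_ n = set0 \/ exists u, O_ n = [set u].
  have [[u [Ou un]] | noO] := pselect (exists u, O u /\ choice.pickle u = n).
    right; exists u; apply/seteqP; split=> v /=; last by move=> ->.
    by move=> [_ vn]; apply: (pcan_inj choice.pickleK); rewrite vn un.
  by left; apply/seteqP; split=> v //= Ov; apply: noO; exists v.
have pieces (h : T -> U) : h @^-1` O = \bigcup_n h @^-1` O_ n.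
  apply/seteqP; split=> w /=; last by move=> [n _ []].
  by move=> Ow; exists (choice.pickle (h w)).
have m_pieces (h : T -> U) : (forall u, measurable (h @^-1` [set u])) ->
    forall n, setT n -> measurable (h @^-1` O_ n).
  by move=> mh n _; case: (O_cases n) => [-> | [u ->]]; rewrite ?preimage_set0.
have disj (h : T -> U) : trivIset setT (fun n => h @^-1` O_ n).
  by move=> n m _ _ [w [[_ <-] [_ <-]]].
rewrite !pieces !measure_bigcup //; [|exact: m_pieces..].
rewrite -nneseriesZl; last by move=> n _; exact: measure_ge0.
apply: lee_nneseries => [n _ _ | n _]; first exact: measure_ge0.
case: (O_cases n) => [-> | [u ->]] //.
by rewrite !preimage_set0 measure0 mule0.
Qed.

End countable_preimage.

Section parameters.
Context {R : realType}.

Lemma ler_abs_ceil (t : R) : 0 <= t -> t <= `|Num.ceil t|%:R.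
Proof.
move=> t0; have t_le := Num.Theory.ceil_ge t.
by rewrite natr_absz ger0_norm // -(ler0z R) (le_trans t0).
Qed.

Lemma n_p_gt0 {eps : R} : 0 < eps -> (0 < n_p eps)%N.
Proof.
move=> eps0; have t0 : 0 < (expR eps - 1)^-1 by rewrite invr_gt0 subr_gt0 expR_gt1.
by rewrite -(ltr0n R) (lt_le_trans t0) // ler_abs_ceil // ltW.
Qed.

Lemma n_p_inv_le {eps : R} : 0 < eps -> 1 + (n_p eps)%:R^-1 <= expR eps.
Proof.
move=> eps0; have e1 : 0 < expR eps - 1 by rewrite subr_gt0 expR_gt1.
rewrite -lerBrDl -[leRHS](invrK (expR eps - 1)) lef_pV2 ?posrE ?invr_gt0 ?ltr0n ?n_p_gt0 //.
by rewrite ler_abs_ceil // invr_ge0 ltW.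
Qed.

Lemma geomCDF_ge0 {p : R} z : 0 <= p <= 1 -> 0 <= geomCDF p z.
Proof. by case/andP=> p0 p1; rewrite subr_ge0 exprn_ile1 // ?subr_ge0 ?lerBlDr ?lerDl. Qed.

Lemma geomCDF_le1 {p : R} z : 0 <= p <= 1 -> geomCDF p z <= 1.
Proof. by case/andP=> p0 p1; rewrite lerBlDr lerDl exprn_ge0 // subr_ge0. Qed.

Lemma geomCDF_homo {p : R} : 0 <= p <= 1 ->
  {homo geomCDF p : x y / (x <= y)%N >-> x <= y}.
Proof.
by case/andP=> p0 p1 x y xy; rewrite lerB // ler_wiXn2l // ?subr_ge0 ?lerBlDr ?lerDl.
Qed.

Lemma geom_param01 {gamma : R} : 0 < gamma -> 0 <= gamma / (1 + gamma) <= 1.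
Proof.
move=> g0; have g1 : 0 < 1 + gamma by rewrite addr_gt0.
by rewrite divr_ge0 ?(ltW g0) ?(ltW g1) //= ler_pdivrMr // mul1r lerDr ler01.
Qed.

(* alpha_min is chosen so that (1 + gamma)^-alpha_min <= 1 - e^-eps. *)
Lemma alpha_min_cdf_bound {eps gamma : R} : 0 < eps -> 0 < gamma ->
  1 <= expR eps * geomCDF (gamma / (1 + gamma)) (alpha_min eps gamma).
Proof.
move=> eps0 g0; set m := alpha_min eps gamma; set y := 1 - expR (- eps).
have g1 : 1 < 1 + gamma by rewrite ltrDl.
have q : 1 - gamma / (1 + gamma) = (1 + gamma)^-1.
  by field; rewrite gt_eqF // (lt_trans ltr01).
have y0 : 0 < y by rewrite subr_gt0 expR_lt1 oppr_lt0.
have ln_y : 0 <= ln y^-1 by rewrite ln_ge0 // invf_ge1 // lerBlDr lerDl expR_ge0.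
have hm : ln y^-1 <= m%:R * ln (1 + gamma).
  by rewrite -ler_pdivrMr ?ln_gt0 // ler_abs_ceil // divr_ge0 // ln_ge0 // (ltW g1).
have qm : (1 + gamma)^-1 ^+ m <= y.
  have q0 : 0 < (1 + gamma)^-1 by rewrite invr_gt0 (lt_trans ltr01).
  rewrite -ler_ln ?posrE ?exprn_gt0 // lnXn // lnV ?posrE ?(lt_trans ltr01 g1) //.
  have -> : ln y = - ln y^-1 by rewrite lnV ?opprK // posrE.
  by rewrite -mulr_natl mulrN lerN2.
have ey : expR (- eps) <= 1 - (1 + gamma)^-1 ^+ m by rewrite lerBrDl -lerBrDr.
rewrite /geomCDF q; apply: le_trans (ler_wpM2l (expR_ge0 eps) ey).
by rewrite -expRD subrr expR0.
Qed.

Lemma eps_prime_gt0 {eps2 delta2 : R} {M : nat} :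
  0 < eps2 -> 0 < delta2 -> delta2 < 1 -> (0 < M)%N -> 0 < eps_prime eps2 delta2 M.
Proof.
move=> e2 d0 d1 M0; rewrite divr_gt0 // mulr_gt0 // sqrtr_gt0.
by rewrite mulr_gt0 ?ltr0n // ln_gt0 // invf_gt1.
Qed.

End parameters.

Definition cluster_size {R : realType} {idT : choiceType} {n k : nat}
  (c : 'I_k.+1 -> 'rV[R]_n) (X : dataset R idT n) (a : 'I_k.+1) : nat :=
  \sum_(u : domf X) (assign c (X u) == a).

Lemma cluster_size_setf {R : realType} {idT : choiceType} {n k : nat}
  (c : 'I_k.+1 -> 'rV[R]_n) (X : dataset R idT n) (u0 : idT) (x : 'rV[R]_n) a :
  u0 \notin domf X ->
  cluster_size c X.[u0 <- x]%fmap a = ((assign c x == a) + cluster_size c X a)%N.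
Proof. exact: (big_domf_setf addn X u0 x (fun v => nat_of_bool (assign c v == a))). Qed.

Section sketch_distribution.
Local Open Scope classical_set_scope.
Context {R : realType} {d : measure_display} {Omega : measurableType d}.
Variables (P : probability Omega R) (idT : choiceType) (Key : Type) (n k : nat).
Variables (H : Key -> idT -> nat) (zeta : Omega -> Key).
Variables (Y : 'I_k.+1 -> nat -> Omega -> nat) (eps gamma p : R).
Variable c : 'I_k.+1 -> 'rV[R]_n.
Hypothesis iidG : iid_geometric P (hash_source H zeta Y) p.

Local Notation sketch X := (DPFM H zeta Y eps gamma c X).
Local Notation m := (alpha_min eps gamma).
Local Notation np := (n_p eps).

Lemma sketch_leqP (X : dataset R idT n) a w b : (sketch X a w <= b)%N <->
  [/\ (m <= b)%N, forall j : 'I_np, (Y a j w <= b)%N &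
      forall u : domf X, assign c (X u) == a -> (H (zeta w) (val u) <= b)%N].
Proof.
rewrite /DPFM !geq_max; split.
  by case/andP=> /andP[/bigmax_leqP Yb /bigmax_leqP Hb] mb; split=> // j; apply: Yb.
by case=> mb Yb Hb; rewrite mb andbT; apply/andP; split; apply/bigmax_leqP.
Qed.

Lemma measurable_sketch_leq (X : dataset R idT n) a z :
  measurable [set w | (sketch X a w <= z)%N].
Proof.
have mG j : measurable [set w | (hash_source H zeta Y j w <= z)%N].
  exact: measurable_leq_of_eq _ (iidG.1 j) z.
have [mz | zm] := leqP m z; last first.
  rewrite (_ : [set w | _] = set0) //; apply/seteqP; split=> w //= /sketch_leqP[mz].
  by move: (leq_trans zm mz); rewrite ltnn.
rewrite (_ : [set w | _] = [set w | forall j : 'I_np, (Y a j w <= z)%N] `&`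
    \bigcap_(u in [set u : domf X | assign c (X u) == a])
      [set w | (H (zeta w) (val u) <= z)%N]).
  apply: measurableI; first by apply: measurable_forall => j; exact: (mG (inr (a, val j))).
  by apply: fin_bigcap_measurable finite_finset _ => u _; exact: (mG (inl (val u))).
by apply/seteqP; split=> w /=; [case/sketch_leqP | case=> *; apply/sketch_leqP].
Qed.

Lemma measurable_sketch_eq (X : dataset R idT n) a z :
  measurable [set w | sketch X a w = z].
Proof. exact: measurable_eq_of_leq _ (measurable_sketch_leq X a) z. Qed.

Let sources (X : dataset R idT n) : seq (idT + ('I_k.+1 * nat)) :=
  [seq inr (aj.1, val aj.2) | aj <- index_enum ('I_k.+1 * 'I_np)%type] ++
  [seq inl v | v <- domf X].

(* The default bound 0 of a key outside X is never used: sources only lists keys of X. *)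
Let source_bound (X : dataset R idT n) (b : 'I_k.+1 -> nat)
    (j : idT + ('I_k.+1 * nat)) : nat :=
  match j with
  | inl v => if X.[? v]%fmap is Some x then b (assign c x) else 0%N
  | inr aj => b aj.1
  end.

Let sources_uniq X : uniq (sources X).
Proof.
rewrite cat_uniq; apply/and3P; split.
- by rewrite map_inj_uniq ?index_enum_uniq // => -[a j] [a' j'] [-> /val_inj ->].
- by apply/hasPn => _ /mapP[v _ ->]; apply/mapP => -[].
- by rewrite map_inj_uniq ?fset_uniq // => v v' [].
Qed.

Let row_leq_sources (X : dataset R idT n) b : (forall a, m <= b a)%N ->
  [set w | forall a, (sketch X a w <= b a)%N] =
  [set w | forall j, j \in sources X -> (hash_source H zeta Y j w <= source_bound X b j)%N].
Proof.
move=> mb; apply/seteqP; split=> w /=.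
  move=> Xb j; rewrite mem_cat => /orP[/mapP[[a i] _ ->] | /mapP[v vX ->]] /=.
    by have /sketch_leqP[_ Yb _] := Xb a; apply: Yb.
  have /sketch_leqP[_ _ Hb] := Xb (assign c (X [` vX]%fset)).
  by rewrite (in_fnd vX); apply: (Hb [` vX]%fset).
move=> srcb a; apply/sketch_leqP; split=> // [i | u /eqP <-].
  apply: (srcb (inr (a, val i))); rewrite mem_cat; apply/orP; left.
  by apply/mapP; exists (a, i); rewrite ?mem_index_enum.
have := srcb (inl (val u)); rewrite mem_cat (map_f _ (valP u)) orbT /= -Some_fnd.
by apply.
Qed.

Lemma sketch_row_cdf (X : dataset R idT n) (b : 'I_k.+1 -> nat) : (0 < np)%N ->
  P [set w | forall a, (sketch X a w <= b a)%N] =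
  (\prod_a trunc_cdf m (geomCDF p) (b a) ^+ (np + cluster_size c X a))%:E.
Proof.
move=> np0; have [/forallP mb | ] := boolP [forall a, m <= b a]%N; last first.
  rewrite negb_forall => /existsP[a0 ba0].
  rewrite (_ : [set w | _] = set0) ?measure0; last first.
    by apply/seteqP; split=> w //= /(_ a0)/sketch_leqP[mb]; rewrite mb in ba0.
  rewrite (bigD1 a0) //= /trunc_cdf (negbTE ba0) mul0r expr0n.
  by rewrite addn_eq0 (gtn_eqF np0) mul0r.
rewrite row_leq_sources // iidG.2 // big_cat !big_map /=; congr EFin.
under [RHS]eq_bigr do rewrite /trunc_cdf mb mul1r exprD.
rewrite big_split /= -(pair_bigA _ (fun a (_ : 'I_np) => geomCDF p (b a))) /=.
congr (_ * _); first by apply: eq_bigr => a _; rewrite prodr_const card_ord.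
rewrite big_seq_fsetE /= -prod_fiber; apply: eq_bigr => u _.
by rewrite -Some_fnd.
Qed.

Lemma sketch_row_pmf (X : dataset R idT n) (f : 'I_k.+1 -> nat) : (0 < np)%N ->
  P [set w | forall a, sketch X a w = f a] =
  (\prod_a pmf_of_cdf (fun z => trunc_cdf m (geomCDF p) z ^+ (np + cluster_size c X a))
     (f a))%:E.
Proof.
move=> np0; apply: pmf_of_cdf_prod => [a z | b]; first exact: measurable_sketch_eq.
exact: sketch_row_cdf.
Qed.

Hypothesis eps_gt0 : 0 < eps.
Hypothesis p01 : 0 <= p <= 1.
Hypothesis alpha_min_cdf : 1 <= expR eps * geomCDF p m.

Lemma sketch_row_pmf_ratio (X : dataset R idT n) u0 x (f : 'I_k.+1 -> nat) :
  u0 \notin domf X ->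
  let X' := X.[u0 <- x]%fmap in
  (P [set w | forall a, sketch X a w = f a] <=
     (expR eps)%:E * P [set w | forall a, sketch X' a w = f a])%E /\
  (P [set w | forall a, sketch X' a w = f a] <=
     (expR eps)%:E * P [set w | forall a, sketch X a w = f a])%E.
Proof.
move=> u0X X'; have np0 := n_p_gt0 eps_gt0.
have F01 z : 0 <= geomCDF p z <= 1 by rewrite geomCDF_ge0 ?geomCDF_le1.
have F_homo := geomCDF_homo p01.
set N := cluster_size c X.
have N' a : cluster_size c X' a = ((assign c x == a) + N a)%N by exact: cluster_size_setf.
have same a : a != assign c x -> (np + cluster_size c X' a = np + N a)%N.
  by rewrite N' eq_sym => /negbTE ->.
have N'x : (np + cluster_size c X' (assign c x) = (np + N (assign c x)).+1)%N.
  by rewrite N' eqxx add1n addnS.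
have N_gt0 : (0 < np + N (assign c x))%N by rewrite (leq_trans np0) ?leq_addr.
have eN : 1 + (np + N (assign c x))%:R^-1 <= expR eps.
  apply: le_trans (n_p_inv_le eps_gt0).
  by rewrite lerD2l lef_pV2 ?posrE ?ltr0n ?ler_nat ?leq_addr.
have [le_N le_N'] :=
  pmf_trunc_cdf_ratio _ _ F01 F_homo _ _ (f (assign c x)) alpha_min_cdf N_gt0 eN.
rewrite !sketch_row_pmf // -!EFinM !lee_fin; split.
- apply: (ler_prodr_at (assign c x)) => [a | a /same -> // | ].
    exact: pmf_trunc_cdf_ge0.
  by rewrite N'x.
- apply: (ler_prodr_at (assign c x)) => [a | a /same -> // | ].
    exact: pmf_trunc_cdf_ge0.
  by rewrite N'x.
Qed.

Lemma DPFMPS_row_eps_DP : eps_DP P eps (DPFMPS_row H zeta Y eps gamma c).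
Proof.
have level X (f : {ffun 'I_k.+1 -> nat}) :
    DPFMPS_row H zeta Y eps gamma c X @^-1` [set f] = [set w | forall a, sketch X a w = f a].
  apply/seteqP; split=> w /=; first by move=> <- a; rewrite ffunE.
  by move=> Xf; apply/ffunP => a; rewrite ffunE.
have m_level X f : measurable (DPFMPS_row H zeta Y eps gamma c X @^-1` [set f]).
  by rewrite level; apply: measurable_forall => a; exact: measurable_sketch_eq.
move=> X X' [[u0 [x [u0X ->]]] | [u0 [x [u0X ->]]]] O;
  apply: le_measure_preimage_countable; rewrite ?expR_ge0 // => f; rewrite !level.
- exact: (sketch_row_pmf_ratio _ _ _ _ u0X).1.
- exact: (sketch_row_pmf_ratio _ _ _ _ u0X).2.
Qed.

End sketch_distribution.

Theorem lemma4p3 (R : realType) (d : measure_display) (Omega : measurableType d)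
  (P : probability Omega R) (idT : choiceType) (K : Type) (n k M : nat)
  (eps2 delta2 gamma : R)
  (H : K -> idT -> nat)
  (zeta : 'I_M -> Omega -> K)
  (Y : 'I_M -> 'I_k.+1 -> nat -> Omega -> nat)
  (c : 'I_k.+1 -> 'rV[R]_n) (i : 'I_M) :
  0 < eps2 -> 0 < delta2 -> delta2 < 1 -> 0 < gamma ->
  iid_geometric P (hash_source H (zeta i) (Y i)) (gamma / (1 + gamma)) ->
  eps_DP P (eps_prime eps2 delta2 M)
    (DPFMPS_row H (zeta i) (Y i) (eps_prime eps2 delta2 M) gamma c).
Proof.
move=> eps2_gt0 delta2_gt0 delta2_lt1 gamma_gt0 iidG.
have M_gt0 : (0 < M)%N := leq_ltn_trans (leq0n i) (ltn_ord i).
have eps_gt0 := eps_prime_gt0 eps2_gt0 delta2_gt0 delta2_lt1 M_gt0.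
exact: DPFMPS_row_eps_DP iidG eps_gt0 (geom_param01 gamma_gt0)
  (alpha_min_cdf_bound eps_gt0 gamma_gt0).
Qed.
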